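(* Let $B(\xi)=\sum_{n=0}^{\infty} c_n \xi^n$ be the power series expansion at $\xi=0$ of the function $B(\xi) = W\!\left(\frac{\xi^2-2}{2e}\right)$, where the branches of the Lambert $W$ function are chosen so that $B$ is analytic on the disc $|\xi|<\sqrt{2}$ with $B(0)=-1$ and $B'(0)=1$ (so $c_0=-1$, $c_1=1$, $c_2=-\tfrac13$, $c_3=\tfrac{11}{72}$, $c_4=-\tfrac{43}{540},\dots$). Then for all $n\ge 0$, $|c_n| < 2\cdot (4/5)^n$, and also $|c_n|\le 1$.
   Context: The Lambert $W$ function is the (multivalued) inverse of $w\mapsto we^w$, i.e. $W(z)e^{W(z)}=z$. Equivalently, $B$ is the unique function analytic on $|\xi|<\sqrt2$ satisfying $B(\xi)e^{B(\xi)} = (\xi^2-2)/(2e)$ with $B(0)=-1$, $B'(0)=1$. In terms of the standard branches $W_k$, $B(\xi)=W_k((\xi^2-2)/(2e))$ with $k=0$ if $-\pi/2<\arg\xi\le\pi/2$, and $k=\pm1$ otherwise. *)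

From Stdlib Require Import Reals Lra.
From Coquelicot Require Export Coquelicot.
Open Scope R_scope.

Definition pser_sum (c : nat -> R) (x : R) : R := PSeries c x.

Definition is_B_coeffs (c : nat -> R) : Prop :=
  (forall x : R, Rabs x < sqrt 2 -> ex_pseries c x) /\
  (forall x : R, Rabs x < sqrt 2 ->
     pser_sum c x * exp (pser_sum c x) = (x ^ 2 - 2) / (2 * exp 1)) /\
  pser_sum c 0 = -1 /\
  Derive (pser_sum c) 0 = 1.

From Stdlib Require Import Reals Lra Lia Factorial.
From Coquelicot Require Import Coquelicot.
Open Scope R_scope.

(* Put T(x) = -B(-x), with coefficients a_n = -(-1)^n c_n, so that |a_n| = |c_n|,
   T(0) = T'(0) = 1 and T e^(1-T) = 1 - x^2/2.  Differentiating this identity twice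
   gives the autonomous equation T'' = M(T - 1) with
   M(s) = (2(s-1)e^(2s) + (2-s^2)e^s)/s^3, whose Taylor coefficients are nonnegative.
   As T - 1 vanishes at 0, the coefficient of x^n on both sides expresses
   (n+1)(n+2) a_(n+2) as a polynomial with nonnegative coefficients in a_1, ..., a_n,
   so every a_n is nonnegative.  Then 1 + r + a_n r^n <= T(r) for 0 <= r < sqrt 2,
   and T(r) < T0 as soon as T0 >= 1 and T0 e^(1-T0) < 1 - r^2/2, because t e^(1-t)
   decreases on [1, oo).  The pairs (r, T0) = (5/4, 17/4) and (1, 3) give
   a_n < 2 (4/5)^n and a_n < 1 for n >= 2. *)

(* Goals produced by [auto_derive] live in Coquelicot's carrier types and
   contain eta-expanded series and unfolded subtractions, which [field]
   does not see through. *)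
Ltac R_field :=
  match goal with |- ?l = ?r => change (@eq R l r) end;
  repeat match goal with
  | |- context [fun y : R => PSeries ?b y] => change (fun y : R => PSeries b y) with (PSeries b)
  end;
  unfold Rminus; field.

Lemma locally_Rabs_lt (x r : R) : Rabs x < r -> locally x (fun y => Rabs y < r).
Proof.
  intros Hx. assert (Hd : 0 < r - Rabs x) by lra.
  exists (mkposreal _ Hd). intros y Hy. change R in y. change (Rabs (y - x) < r - Rabs x) in Hy.
  pose proof (Rabs_triang (y - x) x) as Htri. replace (y - x + x) with y in Htri by ring.
  lra.
Qed.

Lemma locally'_Rabs_pos_lt (r : R) : 0 < r -> locally' 0 (fun x => 0 < Rabs x < r).
Proof.
  intros Hr. unfold locally', within.
  generalize (locally_Rabs_lt 0 r ltac:(rewrite Rabs_R0; exact Hr)).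
  apply filter_imp. intros x Hx Hx0. split; [apply Rabs_pos_lt|]; assumption.
Qed.

Lemma locally_lt_CV_radius (a : nat -> R) (x : R) :
  Rbar_lt (Rabs x) (CV_radius a) ->
  locally x (fun y => Rbar_lt (Rabs y) (CV_radius a)).
Proof.
  destruct (CV_radius a) as [r| |]; simpl; intros Hx.
  - exact (locally_Rabs_lt x r Hx).
  - apply filter_true.
  - contradiction.
Qed.

Lemma locally_bounded_of_continuity (f : R -> R) (x : R) :
  continuity_pt f x -> locally x (fun y => Rabs (f y) <= Rabs (f x) + 1).
Proof.
  intros Hf. apply continuity_pt_locally with (eps := mkposreal 1 Rlt_0_1) in Hf.
  revert Hf. apply filter_imp. intros y Hy; simpl in Hy.
  pose proof (Rabs_triang_inv (f y) (f x)). lra.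
Qed.

Lemma CV_radius_ge (a : nat -> R) (r : Rbar) :
  (forall x, Rbar_lt (Rabs x) r -> ex_pseries a x) -> Rbar_le r (CV_radius a).
Proof.
  intros Hex.
  assert (Hle : forall x, 0 <= x -> Rbar_lt x r -> Rbar_le x (CV_radius a)).
  { intros x Hx0 Hx. apply (proj1 (CV_radius_bounded a)).
    assert (Hs : ex_pseries a x) by (apply Hex; rewrite Rabs_pos_eq; assumption).
    apply ex_pseries_R, ex_series_lim_0 in Hs.
    destruct (filterlim_bounded (V := R_NormedModule) (fun n => a n * x ^ n))
      as [M HM]; [exists 0; exact Hs|].
    exists M. exact HM. }
  apply Rbar_not_lt_le. intros Hlt. pose proof (CV_radius_ge_0 a) as H0.
  destruct (CV_radius a) as [r0| |]; simpl in H0; try contradiction.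
  destruct r as [r| |]; simpl in Hlt; try contradiction.
  - specialize (Hle ((r0 + r) / 2)). simpl in Hle. lra.
  - specialize (Hle (r0 + 1)). simpl in Hle. lra.
Qed.

Lemma CV_radius_decr_n (a : nat -> R) (k : nat) :
  CV_radius (PS_decr_n a k) = CV_radius a.
Proof.
  induction k as [|k IH].
  - apply CV_radius_ext. reflexivity.
  - rewrite <- IH, <- (CV_radius_decr_1 (PS_decr_n a k)).
    apply CV_radius_ext. intros i. unfold PS_decr_1, PS_decr_n. f_equal. lia.
Qed.

Lemma is_derive_unique_loc (f g : R -> R) (x lf lg : R) :
  locally x (fun y => f y = g y) -> is_derive f x lf -> is_derive g x lg -> lf = lg.
Proof.
  intros Heq Hf Hg. apply (is_derive_ext_loc f g) in Hf; [|exact Heq].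
  apply is_derive_unique in Hf. apply is_derive_unique in Hg. congruence.
Qed.

Lemma Rmult_exp_decreasing (s t : R) : 1 <= s <= t -> t * exp (1 - t) <= s * exp (1 - s).
Proof.
  intros Hst.
  assert (Hsplit : exp (1 - s) = exp (1 - t) * exp (t - s))
    by (rewrite <- exp_plus; f_equal; ring).
  pose proof (exp_ineq1_le (t - s)). pose proof (exp_pos (1 - t)).
  rewrite Hsplit.
  assert (t <= s * exp (t - s)) by nra.
  nra.
Qed.

Lemma continuity_pt_bigO_0 (g : R -> R) (C : R) :
  continuity_pt g 0 -> locally' 0 (fun x => Rabs (g x) <= C * Rabs x) -> g 0 = 0.
Proof.
  intros Hcont HO. destruct (Req_dec (g 0) 0) as [|Hg0]; [assumption|exfalso].
  apply Rabs_pos_lt in Hg0.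
  set (eps := Rabs (g 0) / 2). assert (Heps : 0 < eps) by (unfold eps; lra).
  assert (Hnear : locally' 0 (fun x => Rabs (g x - g 0) < eps)).
  { apply (filter_le_within _ _).
    exact (proj1 (continuity_pt_locally g 0) Hcont (mkposreal _ Heps)). }
  assert (Hsmall : locally' 0 (fun x => Rabs x < eps / (Rabs C + 1))).
  { apply (filter_le_within _ _), locally_Rabs_lt. rewrite Rabs_R0.
    pose proof (Rabs_pos C). apply Rdiv_lt_0_compat; lra. }
  destruct (@filter_ex _ _ (Rbar_locally'_filter 0) _
              (filter_and _ _ HO (filter_and _ _ Hnear Hsmall))) as [x [Hx [Hxg Hxs]]].
  pose proof (Rabs_triang_inv (g 0) (g 0 - g x)) as Htri.
  replace (g 0 - (g 0 - g x)) with (g x) in Htri by ring. rewrite Rabs_minus_sym in Hxg.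
  pose proof (Rabs_pos C). pose proof (Rabs_pos x). pose proof (Rle_abs C).
  assert ((Rabs C + 1) * Rabs x < eps).
  { replace eps with ((Rabs C + 1) * (eps / (Rabs C + 1))) by (field; lra).
    apply Rmult_lt_compat_l; lra. }
  unfold eps in *. nra.
Qed.

Lemma PSeries_bigO_coef_0 (e : nat -> R) (n : nat) (C : R) :
  Rbar_lt 0 (CV_radius e) ->
  locally' 0 (fun x => Rabs (PSeries e x) <= C * Rabs x ^ S n) ->
  forall k, (k <= n)%nat -> e k = 0.
Proof.
  intros Hr HO k. induction k as [k IH] using (well_founded_induction Wf_nat.lt_wf).
  intros Hk.
  set (g := PSeries (PS_decr_n e k)).
  assert (Hfac : forall x, PSeries e x = x ^ k * g x).
  { intros x. apply PSeries_decr_n_aux. intros i Hi. apply IH; lia. }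
  replace (e k) with (g 0) by (unfold g; rewrite PSeries_0; unfold PS_decr_n; f_equal; lia).
  apply (continuity_pt_bigO_0 g (Rabs C)).
  { apply PSeries_continuity. rewrite CV_radius_decr_n, Rabs_R0. exact Hr. }
  generalize (filter_and _ _ HO (locally'_Rabs_pos_lt 1 Rlt_0_1)). apply filter_imp.
  intros x [Hx [Hx0 Hx1]]. change R in x.
  assert (Hxk : 0 < Rabs x ^ k) by (apply pow_lt, Hx0).
  assert (Hp : 0 <= Rabs x ^ (n - k) <= 1).
  { split; [apply pow_le, Rabs_pos|]. rewrite <- (pow1 (n - k)).
    apply pow_incr. pose proof (Rabs_pos x). lra. }
  apply Rle_trans with (C * Rabs x * Rabs x ^ (n - k)).
  - apply Rmult_le_reg_l with (1 := Hxk).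
    rewrite Hfac, Rabs_mult, <- RPow_abs in Hx.
    replace (S n) with (k + S (n - k))%nat in Hx by lia.
    rewrite pow_add, <- tech_pow_Rmult in Hx. lra.
  - pose proof (Rabs_pos x). pose proof (Rle_abs C). pose proof (Rabs_pos C).
    assert (C * Rabs x <= Rabs C * Rabs x) by (apply Rmult_le_compat_r; assumption).
    apply Rle_trans with (Rabs C * Rabs x * Rabs x ^ (n - k)).
    + apply Rmult_le_compat_r; [apply Hp|assumption].
    + assert (0 <= Rabs C * Rabs x) by (apply Rmult_le_pos; assumption). nra.
Qed.

Lemma PSeries_ge_terms (a : nat -> R) (r : R) (n : nat) :
  (forall k, 0 <= a k) -> 0 <= r -> ex_pseries a r -> (2 <= n)%nat ->
  a O + a 1%nat * r + a n * r ^ n <= PSeries a r.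
Proof.
  intros Ha Hr Hex Hn.
  assert (Hterm : forall k, 0 <= a k * r ^ k)
    by (intros k; apply Rmult_le_pos; [apply Ha|apply pow_le, Hr]).
  apply Rle_trans with (sum_f_R0 (fun k => a k * r ^ k) n).
  - destruct n as [|[|n]]; [lia|lia|]. clear Hn. rewrite tech5.
    assert (a O * r ^ 0 + a 1%nat * r ^ 1 <= sum_f_R0 (fun k => a k * r ^ k) (S n)).
    { induction n as [|n IH]; [simpl; lra|]. rewrite tech5. pose proof (Hterm (S (S n))). lra. }
    simpl pow in *. lra.
  - apply sum_incr; [|exact Hterm]. apply is_series_Reals, is_pseries_R, PSeries_correct, Hex.
Qed.

(** * Truncated composition and the equation y'' = m(y) *)

Definition PS_one (k : nat) : R := match k with O => 1 | S _ => 0 end.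

Fixpoint PS_pow (a : nat -> R) (j : nat) : nat -> R :=
  match j with O => PS_one | S j => PS_mult a (PS_pow a j) end.

Definition PS_comp_trunc (m a : nat -> R) (n : nat) : nat -> R :=
  fun k => sum_f_R0 (fun j => m j * PS_pow a j k) n.

Lemma PS_minus_PS_one (a : nat -> R) (k : nat) : PS_minus a PS_one k = a k - PS_one k.
Proof. reflexivity. Qed.

Lemma is_pseries_PS_one (x : R) : is_pseries PS_one x 1.
Proof.
  apply is_pseries_R, is_series_Reals. intros eps Heps. exists O. intros N _.
  replace (sum_f_R0 (fun k => PS_one k * x ^ k) N) with 1.
  - rewrite R_dist_eq. exact Heps.
  - induction N as [|N IH]; simpl; [|rewrite <- IH]; ring.
Qed.

Lemma is_pseries_PS_pow (a : nat -> R) (j : nat) (x : R) :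
  Rbar_lt (Rabs x) (CV_radius a) -> is_pseries (PS_pow a j) x (PSeries a x ^ j).
Proof.
  revert x. induction j as [|j IH]; intros x Hx; simpl.
  - apply is_pseries_PS_one.
  - assert (Hj : Rbar_le (CV_radius a) (CV_radius (PS_pow a j))).
    { apply CV_radius_ge. intros y Hy. eexists. exact (IH y Hy). }
    apply is_pseries_mult; [apply PSeries_correct, CV_radius_inside, Hx|apply IH, Hx|exact Hx|].
    apply Rbar_lt_le_trans with (CV_radius a); assumption.
Qed.

Lemma is_pseries_comp_trunc (m a : nat -> R) (n : nat) (x : R) :
  Rbar_lt (Rabs x) (CV_radius a) ->
  is_pseries (PS_comp_trunc m a n) x (sum_f_R0 (fun j => m j * PSeries a x ^ j) n).
Proof.
  intros Hx. induction n as [|n IH]; simpl.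
  - apply (is_pseries_ext (PS_scal (m O) (PS_pow a O))); [reflexivity|].
    apply (is_pseries_scal (V := R_NormedModule) (m O));
      [apply Rmult_comm|apply is_pseries_PS_pow, Hx].
  - apply (is_pseries_ext (PS_plus (PS_comp_trunc m a n) (PS_scal (m (S n)) (PS_pow a (S n)))));
      [reflexivity|].
    apply (is_pseries_plus (V := R_NormedModule) _ _ _ _ _ IH).
    apply (is_pseries_scal (V := R_NormedModule) (m (S n)));
      [apply Rmult_comm|apply is_pseries_PS_pow, Hx].
Qed.

Lemma PS_pow_nonneg (a : nat -> R) (n : nat) :
  (forall k, (k <= n)%nat -> 0 <= a k) ->
  forall j k, (k <= n)%nat -> 0 <= PS_pow a j k.
Proof.
  intros Ha j. induction j as [|j IH]; intros k Hk; simpl.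
  - destruct k; simpl; lra.
  - unfold PS_mult. rewrite <- (Rmult_0_l (INR (S k))), <- sum_cte.
    apply sum_Rle. intros i Hi. apply Rmult_le_pos; [apply Ha|apply IH]; lia.
Qed.

Lemma PS_comp_trunc_nonneg (m a : nat -> R) (n : nat) :
  (forall j, 0 <= m j) -> (forall k, (k <= n)%nat -> 0 <= a k) ->
  forall k, (k <= n)%nat -> 0 <= PS_comp_trunc m a n k.
Proof.
  intros Hm Ha k Hk. apply cond_pos_sum. intros j.
  apply Rmult_le_pos; [apply Hm|apply (PS_pow_nonneg a n Ha j k Hk)].
Qed.

Lemma comp_trunc_bigO (m a : nat -> R) (n : nat) :
  Rbar_lt 0 (CV_radius m) -> Rbar_lt 0 (CV_radius a) -> a O = 0 ->
  exists C, locally 0 (fun x =>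
    Rabs (PSeries m (PSeries a x) - PSeries (PS_comp_trunc m a n) x) <= C * Rabs x ^ S n).
Proof.
  intros Hrm Hra Ha0. rewrite <- Rabs_R0 in Hrm, Hra.
  set (rem := PSeries (PS_decr_n m (S n))).
  set (z := PSeries (PS_decr_1 a)).
  assert (Hrem : locally 0 (fun t => Rabs (rem t) <= Rabs (rem 0) + 1)).
  { apply locally_bounded_of_continuity, PSeries_continuity.
    rewrite CV_radius_decr_n. exact Hrm. }
  assert (Hz : locally 0 (fun x => Rabs (z x) <= Rabs (z 0) + 1)).
  { apply locally_bounded_of_continuity, PSeries_continuity.
    rewrite CV_radius_decr_1. exact Hra. }
  assert (Hlim : filterlim (PSeries a) (locally 0) (locally 0)).
  { replace (locally 0) with (locally (PSeries a 0)) at 2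
      by (rewrite PSeries_0, Ha0; reflexivity).
    apply continuity_pt_filterlim, PSeries_continuity, Hra. }
  exists ((Rabs (rem 0) + 1) * (Rabs (z 0) + 1) ^ S n).
  generalize (filter_and _ _ (filter_and _ _ Hz (locally_lt_CV_radius a 0 Hra))
    (Hlim _ (filter_and _ _ (locally_lt_CV_radius m 0 Hrm) Hrem))).
  apply filter_imp. intros x [[Hzx Hax] [Hmt Hremt]]. change R in x.
  set (t := PSeries a x) in *.
  assert (Ht : t = x * z x) by exact (PSeries_decr_1_aux a x Ha0).
  rewrite (PSeries_decr_n m n t (CV_radius_inside m t Hmt)).
  rewrite (is_pseries_unique _ _ _ (is_pseries_comp_trunc m a n x Hax)).
  fold rem t.
  replace (sum_f_R0 (fun k => m k * t ^ k) n + t ^ S n * rem t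
    - sum_f_R0 (fun j => m j * t ^ j) n) with (t ^ S n * rem t) by ring.
  rewrite Ht at 1. rewrite Rpow_mult_distr, !Rabs_mult, <- !RPow_abs.
  assert (Hzn : Rabs (z x) ^ S n <= (Rabs (z 0) + 1) ^ S n)
    by (apply pow_incr; split; [apply Rabs_pos|exact Hzx]).
  pose proof (pow_le _ (S n) (Rabs_pos x)). pose proof (pow_le _ (S n) (Rabs_pos (z x))).
  pose proof (Rabs_pos (rem t)).
  apply Rle_trans with (Rabs x ^ S n * ((Rabs (z 0) + 1) ^ S n * (Rabs (rem 0) + 1))).
  - rewrite Rmult_assoc. apply Rmult_le_compat_l; [assumption|].
    apply Rmult_le_compat; assumption.
  - right. ring.
Qed.

Section NonnegODE.

Variables m y : nat -> R.
Hypothesis Hm_rad : Rbar_lt 0 (CV_radius m).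
Hypothesis Hy_rad : Rbar_lt 0 (CV_radius y).
Hypothesis Hy0 : y O = 0.
Hypothesis Hode : locally' 0 (fun x =>
  PSeries (PS_derive (PS_derive y)) x = PSeries m (PSeries y x)).

Lemma PS_derive2_eq_comp_trunc (n : nat) :
  PS_derive (PS_derive y) n = PS_comp_trunc m y n n.
Proof.
  set (e := PS_minus (PS_derive (PS_derive y)) (PS_comp_trunc m y n)).
  assert (Hex : forall x, Rbar_lt (Rabs x) (CV_radius y) ->
    ex_pseries (PS_derive (PS_derive y)) x /\ ex_pseries (PS_comp_trunc m y n) x).
  { intros x Hx. split.
    - apply ex_pseries_derive. rewrite CV_radius_derive. exact Hx.
    - eexists. apply is_pseries_comp_trunc, Hx. }
  assert (He_rad : Rbar_lt 0 (CV_radius e)).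
  { apply Rbar_lt_le_trans with (1 := Hy_rad), CV_radius_ge.
    intros x Hx. apply ex_pseries_minus; apply Hex, Hx. }
  destruct (comp_trunc_bigO m y n Hm_rad Hy_rad Hy0) as [C HC].
  assert (Hin : locally' 0 (fun x => Rbar_lt (Rabs x) (CV_radius y))).
  { apply (filter_le_within _ _), locally_lt_CV_radius. rewrite Rabs_R0. exact Hy_rad. }
  assert (HO : locally' 0 (fun x => Rabs (PSeries e x) <= C * Rabs x ^ S n)).
  { generalize (filter_and _ _ Hode (filter_and _ _ Hin (filter_le_within _ _ HC))).
    apply filter_imp. intros x [Hx [Hxr Hbound]].
    destruct (Hex x Hxr) as [Hd HQ].
    unfold e. rewrite PSeries_minus, Hx by assumption. exact Hbound. }
  pose proof (PSeries_bigO_coef_0 e n C He_rad HO n (le_n n)) as Hen.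
  unfold e, PS_minus, PS_plus, PS_opp in Hen. simpl in Hen.
  unfold plus, opp in Hen. simpl in Hen. lra.
Qed.

Lemma PS_nonneg_of_ode : (forall j, 0 <= m j) -> 0 <= y 1 -> forall k, 0 <= y k.
Proof.
  intros Hm Hy1.
  assert (H : forall n k, (k <= S n)%nat -> 0 <= y k).
  { induction n as [|n IH]; intros k Hk.
    - destruct k as [|[|k]]; [rewrite Hy0; lra|exact Hy1|lia].
    - destruct (Nat.le_gt_cases k (S n)) as [Hle|Hgt]; [apply IH, Hle|].
      replace k with (S (S n)) by lia.
      pose proof (PS_derive2_eq_comp_trunc n) as Hn. unfold PS_derive in Hn.
      pose proof (PS_comp_trunc_nonneg m y n Hm (fun i Hi => IH i (le_S _ _ Hi)) n (le_n n)).
      assert (Hpos : 0 < INR (S n) * INR (S (S n)))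
        by (apply Rmult_lt_0_compat; apply lt_0_INR; lia).
      apply Rmult_le_reg_l with (1 := Hpos). lra. }
  intros k. apply (H k), le_S, le_n.
Qed.

End NonnegODE.

(** * The right-hand side M *)

Definition M_coef (k : nat) : R :=
  ((INR k + 1) * 2 ^ (k + 3) + 2 - (INR k + 2) * (INR k + 3)) / INR (fact (k + 3)).

Definition M_fun (t : R) : R := (2 * (t - 1) * exp (2 * t) + (2 - t ^ 2) * exp t) / t ^ 3.

Lemma M_coef_nonneg (k : nat) : 0 <= M_coef k.
Proof.
  unfold M_coef. apply Rdiv_le_0_compat; [|apply lt_0_INR, lt_O_fact].
  assert (Hpow : INR k + 4 <= 2 ^ (k + 3)).
  { induction k as [|k IH]; [simpl; lra|].
    rewrite S_INR. replace (S k + 3)%nat with (S (k + 3)) by lia. simpl pow.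
    pose proof (pos_INR k). lra. }
  pose proof (pos_INR k).
  assert (0 <= (INR k + 1) * (2 ^ (k + 3) - (INR k + 4))) by (apply Rmult_le_pos; lra).
  nra.
Qed.

Lemma is_series_exp_tail (x : R) (n : nat) : (0 < n)%nat ->
  is_series (fun k => / INR (fact (n + k)) * x ^ (n + k))
    (exp x - sum_f_R0 (fun k => / INR (fact k) * x ^ k) (pred n)).
Proof.
  intros Hn.
  apply (is_series_incr_n (V := R_NormedModule) (fun k => / INR (fact k) * x ^ k)); [exact Hn|].
  rewrite sum_n_Reals.
  replace (plus _ _) with (exp x) by (unfold plus; simpl; ring).
  apply is_pseries_R, is_exp_Reals.
Qed.

Lemma is_pseries_M (t : R) : t <> 0 -> is_pseries M_coef t (M_fun t).
Proof.
  intros Ht. apply is_pseries_R.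
  pose proof (is_series_exp_tail (2 * t) 2 ltac:(lia)) as A.
  pose proof (is_series_exp_tail (2 * t) 3 ltac:(lia)) as B.
  pose proof (is_series_exp_tail t 3 ltac:(lia)) as C.
  pose proof (is_series_exp_tail t 1 ltac:(lia)) as D.
  apply (is_series_scal (2 * t / t ^ 3)) in A. apply (is_series_scal (-2 / t ^ 3)) in B.
  apply (is_series_scal (2 / t ^ 3)) in C. apply (is_series_scal (- t ^ 2 / t ^ 3)) in D.
  pose proof (is_series_plus _ _ _ _ (is_series_plus _ _ _ _ A B)
                (is_series_plus _ _ _ _ C D)) as S.
  match type of S with is_series _ ?v => replace (M_fun t) with v end.
  2: { unfold M_fun, plus, scal; simpl; unfold mult; simpl. field. exact Ht. }
  revert S. apply is_series_ext. intros k. cbv beta. unfold M_coef.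
  replace (k + 3)%nat with (S (S (S k))) by lia.
  change (1 + k)%nat with (S k). change (2 + k)%nat with (S (S k)).
  change (3 + k)%nat with (S (S (S k))).
  rewrite !fact_simpl, !mult_INR, !S_INR, !Rpow_mult_distr.
  unfold plus, scal; simpl; unfold mult; simpl.
  match goal with |- ?lhs = ?rhs => change (@eq R lhs rhs) end.
  assert (0 < INR (fact k)) by apply INR_fact_lt_0. pose proof (pos_INR k).
  field. repeat split; lra || exact Ht.
Qed.

Lemma CV_radius_M : CV_radius M_coef = p_infty.
Proof.
  assert (H : Rbar_le p_infty (CV_radius M_coef)).
  { apply CV_radius_ge. intros t _. destruct (Req_dec t 0) as [->|Ht].
    - eexists. apply (is_pseries_0 (V := R_NormedModule)).
    - eexists. apply is_pseries_M, Ht. }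
  destruct (CV_radius M_coef); easy.
Qed.

(** * The function T(x) = -B(-x) *)

Definition Tcoef (c : nat -> R) (n : nat) : R := - (-1) ^ n * c n.

Lemma Tcoef_pow (c : nat -> R) (x : R) (n : nat) :
  Tcoef c n * x ^ n = - (c n * (- x) ^ n).
Proof.
  unfold Tcoef. replace (- x) with ((-1) * x) by ring. rewrite Rpow_mult_distr. ring.
Qed.

Lemma PSeries_Tcoef (c : nat -> R) (x : R) : PSeries (Tcoef c) x = - PSeries c (- x).
Proof.
  unfold PSeries. rewrite <- Series_opp. apply Series_ext. intros n. apply Tcoef_pow.
Qed.

Lemma ex_pseries_Tcoef (c : nat -> R) (x : R) : ex_pseries c (- x) -> ex_pseries (Tcoef c) x.
Proof.
  intros H. apply ex_pseries_R. apply ex_pseries_R, ex_series_opp in H.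
  revert H. apply ex_series_ext. intros n. symmetry. apply Tcoef_pow.
Qed.

Lemma Rabs_Tcoef (c : nat -> R) (n : nat) : Rabs (Tcoef c n) = Rabs (c n).
Proof. unfold Tcoef. rewrite Rabs_mult, Rabs_Ropp, pow_1_abs. ring. Qed.

Section Lambert.

Variable c : nat -> R.
Hypothesis Hc : is_B_coeffs c.

Let a := Tcoef c.
Let T := PSeries a.
Let T1 := PSeries (PS_derive a).
Let T2 := PSeries (PS_derive (PS_derive a)).

Lemma CV_radius_T : Rbar_le (sqrt 2) (CV_radius a).
Proof.
  destruct Hc as [Hex _]. apply CV_radius_ge. intros x Hx.
  apply ex_pseries_Tcoef, Hex. rewrite Rabs_Ropp. exact Hx.
Qed.

Lemma T_inside (x : R) : Rabs x < sqrt 2 -> Rbar_lt (Rabs x) (CV_radius a).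
Proof. intros Hx. exact (Rbar_lt_le_trans (Rabs x) (sqrt 2) _ Hx CV_radius_T). Qed.

Lemma Tcoef_0 : a O = 1.
Proof.
  destruct Hc as [_ [_ [H0 _]]]. unfold pser_sum in H0. rewrite PSeries_0 in H0.
  unfold a, Tcoef. rewrite H0. simpl. ring.
Qed.

Lemma Tcoef_1 : a 1%nat = 1.
Proof.
  destruct Hc as [Hex [_ [_ H1]]]. unfold pser_sum in H1.
  assert (Hr : Rbar_le (sqrt 2) (CV_radius c)) by (apply CV_radius_ge, Hex).
  rewrite Derive_PSeries, PSeries_0 in H1.
  - unfold PS_derive in H1. unfold a, Tcoef. simpl in *. lra.
  - rewrite Rabs_R0. apply Rbar_lt_le_trans with (2 := Hr). apply sqrt_lt_R0. lra.
Qed.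

Lemma T_lambert (x : R) : Rabs x < sqrt 2 -> T x * exp (1 - T x) = 1 - x ^ 2 / 2.
Proof.
  intros Hx. destruct Hc as [_ [Heq _]].
  specialize (Heq (- x) ltac:(rewrite Rabs_Ropp; exact Hx)). unfold pser_sum in Heq.
  unfold T, a. rewrite PSeries_Tcoef. set (B := PSeries c (- x)) in *.
  replace (1 - - B) with (1 + B) by ring. rewrite exp_plus.
  replace (- B * (exp 1 * exp B)) with (- exp 1 * (B * exp B)) by ring.
  rewrite Heq. field. apply Rgt_not_eq, exp_pos.
Qed.

Lemma T_ode1 (x : R) : Rabs x < sqrt 2 -> (T x - 1) * T1 x = x * exp (T x - 1).
Proof.
  intros Hx.
  assert (Hd : is_derive (fun y => T y * exp (1 - T y)) x
                 (T1 x * exp (1 - T x) - T x * exp (1 - T x) * T1 x)).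
  { unfold T, T1. rewrite <- Derive_PSeries by (apply T_inside, Hx).
    auto_derive; [repeat split; apply ex_derive_PSeries, T_inside, Hx|].
    R_field. }
  assert (Hg : is_derive (fun y : R => 1 - y ^ 2 / 2) x (- x)).
  { auto_derive; [exact I|]. R_field. }
  assert (E := is_derive_unique_loc _ _ _ _ _
    (filter_imp _ _ T_lambert (locally_Rabs_lt x _ Hx)) Hd Hg).
  assert (HE : exp (1 - T x) * exp (T x - 1) = 1).
  { rewrite <- exp_plus, <- exp_0. f_equal. ring. }
  transitivity ((T1 x * exp (1 - T x) - T x * exp (1 - T x) * T1 x) * - exp (T x - 1)).
  - replace (T1 x * exp (1 - T x) - T x * exp (1 - T x) * T1 x)
      with ((1 - T x) * T1 x * exp (1 - T x)) by ring.
    replace ((1 - T x) * T1 x * exp (1 - T x) * - exp (T x - 1))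
      with ((T x - 1) * T1 x * (exp (1 - T x) * exp (T x - 1))) by ring.
    rewrite HE. ring.
  - rewrite E. ring.
Qed.

Lemma T_ode2 (x : R) : Rabs x < sqrt 2 ->
  T1 x ^ 2 + (T x - 1) * T2 x = exp (T x - 1) * (1 + x * T1 x).
Proof.
  intros Hx.
  assert (Hx1 : Rbar_lt (Rabs x) (CV_radius (PS_derive a)))
    by (rewrite CV_radius_derive; apply T_inside, Hx).
  assert (Hd : is_derive (fun y => (T y - 1) * T1 y) x
                 (Derive (PSeries a) x * T1 x + (T x - 1) * Derive (PSeries (PS_derive a)) x)).
  { unfold T, T1.
    auto_derive; [repeat split; apply ex_derive_PSeries; [apply T_inside, Hx|exact Hx1]|].
    R_field. }
  rewrite Derive_PSeries, (Derive_PSeries (PS_derive a)) in Hd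
    by (apply T_inside, Hx || exact Hx1).
  fold T1 T2 in Hd. replace (T1 x * T1 x) with (T1 x ^ 2) in Hd by ring.
  assert (Hg : is_derive (fun y => y * exp (T y - 1)) x (exp (T x - 1) * (1 + x * T1 x))).
  { unfold T, T1. rewrite <- Derive_PSeries by (apply T_inside, Hx).
    auto_derive; [repeat split; apply ex_derive_PSeries, T_inside, Hx|]. R_field. }
  exact (is_derive_unique_loc _ _ _ _ _
    (filter_imp _ _ T_ode1 (locally_Rabs_lt x _ Hx)) Hd Hg).
Qed.

Lemma T_ne_1 (x : R) : 0 < Rabs x < sqrt 2 -> T x <> 1.
Proof.
  intros [H0 Hx] E. pose proof (T_ode1 x Hx) as H.
  rewrite E, Rminus_diag, exp_0, Rmult_0_l, Rmult_1_r in H. subst x.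
  rewrite Rabs_R0 in H0. lra.
Qed.

Lemma T_ode (x : R) : 0 < Rabs x < sqrt 2 -> T2 x = M_fun (T x - 1).
Proof.
  intros Hx. pose proof (T_ne_1 x Hx) as Hne. destruct Hx as [_ Hx].
  pose proof (T_ode1 x Hx) as H1. pose proof (T_ode2 x Hx) as H2.
  pose proof (T_lambert x Hx) as H3. unfold M_fun.
  set (s := T x - 1) in *. set (E := exp s) in *.
  assert (Hs : s <> 0) by (unfold s; lra).
  assert (HE : 0 < E) by apply exp_pos.
  assert (Hinv : exp (1 - T x) = / E) by (unfold E, s; rewrite <- exp_Ropp; f_equal; ring).
  assert (H2s : exp (2 * s) = E * E) by (unfold E; rewrite <- exp_plus; f_equal; ring).
  rewrite H2s. rewrite Hinv in H3. replace (T x) with (1 + s) in H3 by (unfold s; ring).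
  assert (Hx2 : x ^ 2 * E ^ 2 = 2 * E ^ 2 - 2 * (1 + s) * E).
  { replace (x ^ 2) with (2 - 2 * ((1 + s) * / E)) by lra. field. lra. }
  assert (H4 : s ^ 3 * T2 x = s ^ 2 * E + (s - 1) * (x ^ 2 * E ^ 2)).
  { replace (s ^ 3 * T2 x) with (s ^ 2 * (s * T2 x)) by ring.
    replace (s * T2 x) with (E * (1 + x * T1 x) - T1 x ^ 2) by lra.
    replace (s ^ 2 * (E * (1 + x * T1 x) - T1 x ^ 2))
      with (s ^ 2 * E + E * x * s * (s * T1 x) - (s * T1 x) ^ 2) by ring.
    rewrite H1. ring. }
  rewrite Hx2 in H4.
  apply (Rmult_eq_reg_l (s ^ 3)); [|apply pow_nonzero, Hs].
  rewrite H4. field. exact Hs.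
Qed.

Lemma PSeries_T_sub_1 (x : R) : Rabs x < sqrt 2 -> PSeries (PS_minus a PS_one) x = T x - 1.
Proof.
  intros Hx. rewrite PSeries_minus.
  - rewrite (is_pseries_unique _ _ _ (is_pseries_PS_one x)). reflexivity.
  - apply CV_radius_inside, T_inside, Hx.
  - eexists. apply is_pseries_PS_one.
Qed.

Lemma CV_radius_T_sub_1 : Rbar_lt 0 (CV_radius (PS_minus a PS_one)).
Proof.
  apply Rbar_lt_le_trans with (sqrt 2); [apply sqrt_lt_R0; lra|].
  apply CV_radius_ge. intros x Hx. apply ex_pseries_minus.
  - apply CV_radius_inside, T_inside, Hx.
  - eexists. apply is_pseries_PS_one.
Qed.

Lemma T_sub_1_ode : locally' 0 (fun x =>
  PSeries (PS_derive (PS_derive (PS_minus a PS_one))) x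
  = PSeries M_coef (PSeries (PS_minus a PS_one) x)).
Proof.
  generalize (locally'_Rabs_pos_lt (sqrt 2) ltac:(apply sqrt_lt_R0; lra)).
  apply filter_imp. intros x Hx. change R in x.
  rewrite (PSeries_ext _ (PS_derive (PS_derive a))).
  - fold T2. rewrite T_ode, PSeries_T_sub_1 by apply Hx.
    symmetry. apply is_pseries_unique, is_pseries_M, Rminus_eq_contra, T_ne_1, Hx.
  - intros k. unfold PS_derive. rewrite PS_minus_PS_one. simpl. ring.
Qed.

Lemma Tcoef_nonneg (n : nat) : 0 <= a n.
Proof.
  destruct n as [|n]; [rewrite Tcoef_0; lra|].
  assert (H := PS_nonneg_of_ode M_coef (PS_minus a PS_one)
    ltac:(rewrite CV_radius_M; exact I) CV_radius_T_sub_1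
    ltac:(rewrite PS_minus_PS_one, Tcoef_0; simpl; ring) T_sub_1_ode M_coef_nonneg
    ltac:(rewrite PS_minus_PS_one, Tcoef_1; simpl; lra) (S n)).
  rewrite PS_minus_PS_one in H. simpl in H. lra.
Qed.

Lemma T_lt (r T0 : R) :
  0 <= r < sqrt 2 -> 1 <= T0 -> T0 * exp (1 - T0) < 1 - r ^ 2 / 2 -> T r < T0.
Proof.
  intros Hr HT0 Hexp. apply Rnot_le_lt. intros Hle.
  assert (Hrr : Rabs r < sqrt 2) by (rewrite Rabs_pos_eq; lra).
  pose proof (Rmult_exp_decreasing T0 (T r) (conj HT0 Hle)).
  pose proof (T_lambert r Hrr). lra.
Qed.

Lemma Tcoef_bound (r T0 : R) (n : nat) :
  0 <= r < sqrt 2 -> 1 <= T0 -> T0 * exp (1 - T0) < 1 - r ^ 2 / 2 -> (2 <= n)%nat ->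
  a n * r ^ n < T0 - 1 - r.
Proof.
  intros Hr HT0 Hexp Hn.
  assert (Hrr : Rabs r < sqrt 2) by (rewrite Rabs_pos_eq; lra).
  pose proof (PSeries_ge_terms a r n Tcoef_nonneg (proj1 Hr)
    (CV_radius_inside _ _ (T_inside r Hrr)) Hn) as Hterms.
  pose proof (T_lt r T0 Hr HT0 Hexp).
  rewrite Tcoef_0, Tcoef_1 in Hterms. fold T in Hterms. lra.
Qed.

End Lambert.

Lemma sqrt2_gt_5_4 : 5 / 4 < sqrt 2.
Proof.
  rewrite <- (sqrt_pow2 (5 / 4)) by lra. apply sqrt_lt_1_alt. lra.
Qed.

Lemma exp_bound_17_4 : 17 / 4 * exp (1 - 17 / 4) < 1 - (5 / 4) ^ 2 / 2.
Proof.
  replace (1 - 17 / 4) with (- (13 / 4)) by field. rewrite exp_Ropp.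
  pose proof (exp_ge_taylor (13 / 4) 5 ltac:(lra)) as H. simpl in H.
  apply Rmult_lt_reg_r with (exp (13 / 4)); [apply exp_pos|]. field_simplify; lra.
Qed.

Lemma exp_bound_3 : 3 * exp (1 - 3) < 1 - 1 ^ 2 / 2.
Proof.
  replace (1 - 3) with (Ropp 2) by ring. rewrite exp_Ropp.
  pose proof (exp_ge_taylor 2 3 ltac:(lra)) as H. simpl in H.
  apply Rmult_lt_reg_r with (exp 2); [apply exp_pos|]. field_simplify; lra.
Qed.

Theorem theorem1 (c : nat -> R) (Hc : is_B_coeffs c) :
  forall n : nat, Rabs (c n) < 2 * (4 / 5) ^ n /\ Rabs (c n) <= 1.
Proof.
  intros n. rewrite <- Rabs_Tcoef, Rabs_pos_eq by apply (Tcoef_nonneg c Hc).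
  pose proof sqrt2_gt_5_4.
  destruct (Nat.le_gt_cases 2 n) as [Hn|Hn].
  - split.
    + pose proof (Tcoef_bound c Hc (5 / 4) (17 / 4) n ltac:(lra) ltac:(lra) exp_bound_17_4 Hn).
      assert (Hp : (5 / 4) ^ n * (4 / 5) ^ n = 1).
      { rewrite <- Rpow_mult_distr. replace (5 / 4 * (4 / 5)) with 1 by field. apply pow1. }
      replace (Tcoef c n) with (Tcoef c n * (5 / 4) ^ n * (4 / 5) ^ n)
        by (rewrite Rmult_assoc, Hp; ring).
      apply Rmult_lt_compat_r; [apply pow_lt|]; lra.
    + pose proof (Tcoef_bound c Hc 1 3 n ltac:(lra) ltac:(lra) exp_bound_3 Hn).
      rewrite pow1 in *. lra.
  - destruct n as [|[|n]]; try lia;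
      [rewrite (Tcoef_0 c Hc)|rewrite (Tcoef_1 c Hc)]; simpl; lra.
Qed.
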